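(* Let $k$ be a field, $A$ a $k$-algebra, $a_1,\ldots,a_m\in A$ and $d\ge1$. If $P_{\ge0}(a_1,\ldots,a_m)\subseteq P_{\le d-1}(a_1,\ldots,a_m)$, then every element of $ka_1+\cdots+ka_m$ is algebraic over $k$ of degree at most $M_{d,m}=\binom{d+m-1}{m}$.
   Context: Algebras are associative with unit. For nonnegative integers $i_1,\ldots,i_m$, $p_{i_1,\ldots,i_m}(x_1,\ldots,x_m)$ is the sum of all distinct noncommutative monomials with exactly $i_j$ occurrences of $x_j$ for each $j$ ($p_{0,\ldots,0}=1$); $p_{i_1,\ldots,i_m}(a_1,\ldots,a_m)$ is its evaluation at $x_j=a_j$. $P_n(a_1,\ldots,a_m)=\operatorname{span}_k\{p_{i_1,\ldots,i_m}(a_1,\ldots,a_m)\mid i_1+\cdots+i_m=n\}$, $P_{\le r}(a_1,\ldots,a_m)=\sum_{n=0}^rP_n(a_1,\ldots,a_m)$, $P_{\ge r}(a_1,\ldots,a_m)=\sum_{n=r}^\infty P_n(a_1,\ldots,a_m)$. Algebraic of degree at most $D$ means a root of a nonzero polynomial in $k[t]$ of degree at most $D$. *)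

From HB Require Import structures.
From mathcomp Require Import all_boot all_order all_algebra.
Set Implicit Arguments. Unset Strict Implicit. Unset Printing Implicit Defensive.
Import Order.TTheory GRing.Theory Num.Theory.
Local Open Scope ring_scope.

Definition mdeg (m : nat) (i : 'I_m -> nat) : nat := (\sum_(j < m) i j)%N.

(* p_{i_1,...,i_m}(a_1,...,a_m): the sum over all distinct noncommutative
   monomials (= words over the alphabet 'I_m) having exactly i_j occurrences
   of the letter j, each word w evaluated as the product a_{w_1} ... a_{w_n}. *)
Definition pev (k : fieldType) (A : algType k) (m : nat)
    (a : 'I_m -> A) (i : 'I_m -> nat) : A :=
  \sum_(w : (mdeg i).-tuple 'I_m | [forall j, count_mem j w == i j])
     \prod_(l <- w) a l.

Definition inP_le (k : fieldType) (A : algType k) (m : nat)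
    (a : 'I_m -> A) (r : nat) (x : A) : Prop :=
  exists s : seq (('I_m -> nat) * k),
    all (fun t => mdeg t.1 <= r)%N s /\ x = \sum_(t <- s) t.2 *: pev a t.1.

Definition inP_ge (k : fieldType) (A : algType k) (m : nat)
    (a : 'I_m -> A) (r : nat) (x : A) : Prop :=
  exists s : seq (('I_m -> nat) * k),
    all (fun t => r <= mdeg t.1)%N s /\ x = \sum_(t <- s) t.2 *: pev a t.1.

(* x is algebraic over k of degree at most D: root of a nonzero q \in k[t]
   with deg q <= D (size q = deg q + 1). *)
Definition algebraic_deg_le (k : fieldType) (A : algType k) (D : nat) (x : A) : Prop :=
  exists q : {poly k}, q != 0 /\ (size q <= D.+1)%N /\ horner_alg x q = 0.

From HB Require Import structures.
From mathcomp Require Import all_boot all_order all_algebra.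
Import GRing.Theory.
Set Implicit Arguments.
Unset Strict Implicit.
Local Open Scope ring_scope.

(* Expanding x = \sum_j c j *: a j, the power x ^+ n is a combination of the
   p_i(a) with |i| = n, so by hypothesis every power of x lies in P_{<= d-1}(a).
   That space is spanned by the p_i(a) with |i| <= d - 1, which are indexed by
   'C(d + m - 1, m) multi-indices; hence 1, x, ..., x ^+ 'C(d + m - 1, m) are
   linearly dependent, and a dependence relation is a nonzero polynomial of
   degree at most 'C(d + m - 1, m) vanishing at x. *)

Section Span.

Variables (k : fieldType) (V : lmodType k).
Variables (I : finType) (S : {pred I}) (v : I -> V).

Definition in_span (y : V) := exists f : I -> k, y = \sum_(i in S) f i *: v i.

Lemma in_span0 : in_span 0.
Proof. by exists (fun=> 0); rewrite big1 // => i _; rewrite scale0r. Qed.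

Lemma in_spanD y z : in_span y -> in_span z -> in_span (y + z).
Proof.
move=> [f ->] [g ->]; exists (fun i => f i + g i).
by rewrite -big_split; apply: eq_bigr => i _; rewrite scalerDl.
Qed.

Lemma in_spanZ t y : in_span y -> in_span (t *: y).
Proof.
move=> [f ->]; exists (fun i => t * f i).
by rewrite scaler_sumr; apply: eq_bigr => i _; rewrite scalerA.
Qed.

Lemma in_span_gen i : i \in S -> in_span (v i).
Proof.
move=> Si; exists (fun j => (j == i)%:R); rewrite (bigD1 i) //= eqxx scale1r.
by rewrite big1 ?addr0 // => j /andP[_ /negbTE ->]; rewrite scale0r.
Qed.

(* The coefficient rows of the [y j] form an [n x #|S|] matrix of rank less
   than [n], so its left kernel is nonzero. *)
Lemma in_span_dependent n (y : 'I_n -> V) : (#|S| < n)%N ->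
    (forall j, in_span (y j)) ->
  exists l : 'I_n -> k, (exists j, l j != 0) /\ \sum_j l j *: y j = 0.
Proof.
move=> ltSn /fin_all_exists[F yF].
pose M := \matrix_(j < n, r < #|S|) F j (enum_val r).
have : kermx M != 0.
  rewrite -mxrank_eq0 mxrank_ker -lt0n subn_gt0.
  exact: leq_ltn_trans (rank_leq_col M) ltSn.
case/rowV0Pn=> u /sub_kermxP uM u_nz; exists (u 0); split.
  apply/existsP; apply: contraNT u_nz; rewrite negb_exists => /forallP u0.
  by apply/eqP/rowP => j; rewrite mxE; apply/eqP/negPn/u0.
under eq_bigr do rewrite yF scaler_sumr.
rewrite exchange_big big1 //= => i Si.
have uFi : \sum_j u 0 j * F j i = 0.
  have := congr1 (fun X : 'rV_#|S| => X 0 (enum_rank_in Si i)) uM.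
  rewrite !mxE => {2}<-; apply: eq_bigr => j _.
  by rewrite /M mxE enum_rankK_in.
rewrite -[RHS](scale0r (v i)) -uFi scaler_suml.
by under eq_bigr do rewrite scalerA.
Qed.

End Span.

Lemma expr_sum_tuple (R : pzSemiRingType) (J : finType) (b : J -> R) n :
  (\sum_j b j) ^+ n = \sum_(w : n.-tuple J) \prod_(l <- w) b l.
Proof.
rewrite -[n in LHS]card_ord -prodr_const bigA_distr_bigA /=.
rewrite (reindex (@finfun_of_tuple _ _)) /=; last first.
  exists (@tuple_of_finfun _ _) => f _;
  by rewrite (finfun_of_tupleK, tuple_of_finfunK).
apply: eq_bigr => w _; rewrite big_tuple.
by apply: eq_bigr => i _; rewrite ffunE.
Qed.

Lemma prod_count_mem (R : comPzSemiRingType) (J : finType) (c : J -> R)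
    (w : seq J) :
  \prod_(l <- w) c l = \prod_j c j ^+ count_mem j w.
Proof.
elim: w => [|l w IHw]; first by rewrite big_nil big1 // => j _; rewrite expr0.
rewrite big_cons IHw; under [RHS]eq_bigr do rewrite /= exprD.
rewrite big_split /=; congr (_ * _).
rewrite (bigD1 l) //= eqxx expr1 big1 ?mulr1 // => j /negbTE.
by rewrite eq_sym => ->; rewrite expr0.
Qed.

Lemma sum_count_mem (J : finType) (s : seq J) :
  (\sum_j count_mem j s)%N = size s.
Proof.
elim: s => [|l s IHs]; first by rewrite big1.
rewrite /= big_split /= IHs (bigD1 l) //= eqxx big1 // => j /negbTE.
by rewrite eq_sym => ->.
Qed.

(* Multi-indices of total degree at most r, as m-tuples: no entry exceeds r. *)
Definition mindex_le (m r : nat) : {set m.-tuple 'I_r.+1} :=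
  [set t : m.-tuple 'I_r.+1 | (\sum_(i <- t) i <= r)%N].

Section Monomials.

Variables (k : fieldType) (A : algType k) (m : nat) (a : 'I_m -> A).

Lemma leq_mdeg (i : 'I_m -> nat) j : (i j <= mdeg i)%N.
Proof. by rewrite /mdeg (bigD1 j) //= leq_addr. Qed.

Lemma pevE {n} {i : 'I_m -> nat} : mdeg i = n ->
  pev a i = \sum_(w : n.-tuple 'I_m | [forall j, count_mem j w == i j])
              \prod_(l <- w) a l.
Proof. by move=> <-. Qed.

Lemma eq_pev (i i' : 'I_m -> nat) : i =1 i' -> pev a i = pev a i'.
Proof.
move=> ii'.
have deg_i' : mdeg i' = mdeg i by apply: eq_bigr => j _; rewrite ii'.
rewrite (pevE (erefl (mdeg i))) (pevE deg_i').
by apply: eq_bigl => w; apply: eq_forallb => j; rewrite ii'.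
Qed.

Lemma inP_ge_leq r r' x : (r' <= r)%N -> inP_ge a r x -> inP_ge a r' x.
Proof.
move=> le_r'r [s [s_ge ->]]; exists s; split=> //.
by apply: sub_all s_ge => t; apply: leq_trans.
Qed.

Lemma inP_ge_sum (J : finType) (P : pred J) (e : J -> 'I_m -> nat)
    (f : J -> k) r :
  (forall t, P t -> r <= mdeg (e t))%N ->
  inP_ge a r (\sum_(t | P t) f t *: pev a (e t)).
Proof.
move=> e_ge; exists [seq (e t, f t) | t <- enum P].
split; last by rewrite big_map big_enum.
by rewrite all_map; apply/allP => t; rewrite mem_enum => /e_ge.
Qed.

Lemma expr_lincomb_inP_ge (c : 'I_m -> k) n :
  inP_ge a n ((\sum_j c j *: a j) ^+ n).
Proof.
(* Group the words w by their letter counts, which are at most n. *)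
pose cnt (w : n.-tuple 'I_m) : m.-tuple 'I_n.+1 :=
  [tuple inord (count_mem j w) | j < m].
pose e (t : m.-tuple 'I_n.+1) j : nat := tnth t j.
have cntE w j : e (cnt w) j = count_mem j w.
  rewrite /e tnth_mktuple inordK // ltnS.
  by apply: leq_trans (count_size _ w) _; rewrite size_tuple.
have cnt_eq w t : (cnt w == t) = [forall j, count_mem j w == e t j].
  apply/eqP/forallP => [<- j|wt]; first by rewrite cntE.
  apply: eq_from_tnth => j; apply: val_inj.
  by rewrite /= -/(e _ j) cntE (eqP (wt j)).
rewrite expr_sum_tuple; under eq_bigr do rewrite scaler_prod prod_count_mem.
rewrite (partition_big cnt (fun t => mdeg (e t) == n)) => [|w _]; last first.
  rewrite /mdeg; under eq_bigr do rewrite cntE.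
  by rewrite sum_count_mem size_tuple.
rewrite (eq_bigr (fun t => (\prod_j c j ^+ e t j) *: pev a (e t)));
  last move=> t /eqP deg_t.
  by apply: inP_ge_sum => t /eqP ->.
rewrite (pevE deg_t) scaler_sumr.
apply: eq_big => [w|w]; first by rewrite cnt_eq.
by move=> /eqP <-; congr (_ *: _); apply: eq_bigr => j _; rewrite cntE.
Qed.

Definition pev_mindex {r} (t : m.-tuple 'I_r.+1) := pev a (fun j => tnth t j).

Lemma pev_in_span r (i : 'I_m -> nat) :
  (mdeg i <= r)%N -> in_span (mindex_le m r) pev_mindex (pev a i).
Proof.
move=> deg_i; pose t : m.-tuple 'I_r.+1 := [tuple inord (i j) | j < m].
have tE j : tnth t j = i j :> nat.
  by rewrite tnth_mktuple inordK // ltnS (leq_trans (leq_mdeg i j)).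
have t_le : t \in mindex_le m r.
  by rewrite inE big_tuple; under eq_bigr do rewrite tE.
rewrite (@eq_pev i (fun j => tnth t j)) => [|j]; last by rewrite tE.
exact: in_span_gen.
Qed.

Lemma inP_le_in_span r x :
  inP_le a r x -> in_span (mindex_le m r) pev_mindex x.
Proof.
case=> s [+ ->]; elim: s => [_|t s IHs /andP[deg_t /IHs s_span]].
  by rewrite big_nil; apply: in_span0.
by rewrite big_cons; apply: in_spanD s_span; apply/in_spanZ/pev_in_span.
Qed.

End Monomials.

Lemma algebraic_deg_le_lin_rel (k : fieldType) (A : algType k) n (x : A)
    (l : 'I_n.+1 -> k) :
  (exists j, l j != 0) -> \sum_j l j *: x ^+ j = 0 -> algebraic_deg_le n x.
Proof.
move=> [j l_j] l_rel; exists (\poly_(i < n.+1) l (inord i)); split; last split.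
- apply: contra_neq l_j => /(congr1 (fun p : {poly k} => p`_j)).
  by rewrite coef_poly ltn_ord inord_val coef0.
- exact: size_poly.
- rewrite poly_def rmorph_sum /= -[RHS]l_rel; apply: eq_bigr => i _.
  by rewrite linearZ /= rmorphXn /= horner_algX inord_val mulr_algl.
Qed.

Theorem corollary3p6 (k : fieldType) (A : algType k) (m d : nat)
    (a : 'I_m -> A) :
  (1 <= d)%N ->
  (forall x : A, inP_ge a 0 x -> inP_le a d.-1 x) ->
  forall c : 'I_m -> k,
    algebraic_deg_le ('C(d + m - 1, m)) (\sum_(j < m) c j *: a j).
Proof.
move=> d_gt0 P_ge0_le c; set x := \sum_(j < m) c j *: a j.
have card_mindex : #|mindex_le m d.-1| = 'C(d + m - 1, m).
  by rewrite card_partial_ord_partitions -subn1 addnBA // [(m + d)%N]addnC.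
have x_span (j : 'I_#|mindex_le m d.-1|.+1) :
    in_span (mindex_le m d.-1) (pev_mindex a) (x ^+ j).
  exact/inP_le_in_span/P_ge0_le/(inP_ge_leq (leq0n j))/expr_lincomb_inP_ge.
have [l [l_nz l_rel]] := in_span_dependent (ltnSn _) x_span.
by rewrite -card_mindex; apply: algebraic_deg_le_lin_rel l_nz l_rel.
Qed.
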